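(* Let $A,B\in S(4,\mathbb{R})$, let $\{v_1,v_2,v_3,v_4\}$ be a symplectic basis for $A$ and $\{w_1,w_2,w_3,w_4\}$ a symplectic basis for $B$. If the basis-values of these two bases are equal, i.e. $(v_1^TJv_2, v_1^TJv_3, v_1^TJv_4, v_2^TJv_3, v_2^TJv_4, v_3^TJv_4) = (w_1^TJw_2, w_1^TJw_3, w_1^TJw_4, w_2^TJw_3, w_2^TJw_4, w_3^TJw_4)$, then there exists $P\in\operatorname{Sp}(4)$ with $A = P^T B P$.
   Context: $S(4,\mathbb{R})$ is the set of invertible skew-symmetric real $4\times4$ matrices; $J = \operatorname{diag}(J_0,J_0)$ with $J_0 = \begin{bmatrix} 0 & 1 \\ -1 & 0\end{bmatrix}$; $\operatorname{Sp}(4) = \{P : P^TJP = J\}$. A basis $\{v_1,v_2,v_3,v_4\}$ of $\mathbb{R}^4$ is a symplectic basis for $A$ if $v_1^TAv_2 = 1$, $v_1^TAv_3 = 0$, $v_1^TAv_4 = 0$, $v_2^TAv_3 = 0$, $v_2^TAv_4 = 0$, $v_3^TAv_4 = 1$. *)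

From HB Require Import structures.
From mathcomp Require Import all_boot all_order all_algebra.
From mathcomp Require Import Rstruct.
From Stdlib Require Import Reals.
Set Implicit Arguments. Unset Strict Implicit. Unset Printing Implicit Defensive.
Import GRing.Theory Num.Theory.
Local Open Scope ring_scope.

Definition mat4 := 'M[R]_4.
Definition vec4 := 'cV[R]_4.

Definition bform (A : mat4) (u v : vec4) : R := ((u^T *m A *m v) 0 0).

Definition is_S4 (A : mat4) : Prop := A^T = - A /\ A \in unitmx.

(* J = diag(J0, J0), J0 = [[0,1],[-1,0]] *)
Definition J0 : 'M[R]_2 := \matrix_(i < 2, j < 2)
  (if (i == 0 :> nat) && (j == 1 :> nat) then 1
   else if (i == 1 :> nat) && (j == 0 :> nat) then -1 else 0).
Definition Jmat : mat4 := block_mx J0 0 0 J0.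

Definition is_Sp4 (P : mat4) : Prop := P^T *m Jmat *m P = Jmat.

Definition colmat (v : 'I_4 -> vec4) : mat4 := \matrix_(i < 4, j < 4) v j i 0.

Definition is_basis4 (v : 'I_4 -> vec4) : Prop := colmat v \in unitmx.

Definition i0 : 'I_4 := @Ordinal 4 0 isT.
Definition i1 : 'I_4 := @Ordinal 4 1 isT.
Definition i2 : 'I_4 := @Ordinal 4 2 isT.
Definition i3 : 'I_4 := @Ordinal 4 3 isT.

(* symplectic basis for A (indices 0..3 correspond to v_1..v_4) *)
Definition symplectic_basis (A : mat4) (v : 'I_4 -> vec4) : Prop :=
  is_basis4 v /\
  bform A (v i0) (v i1) = 1 /\ bform A (v i0) (v i2) = 0 /\
  bform A (v i0) (v i3) = 0 /\ bform A (v i1) (v i2) = 0 /\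
  bform A (v i1) (v i3) = 0 /\ bform A (v i2) (v i3) = 1.

Definition basis_values (v : 'I_4 -> vec4) : R * R * R * R * R * R :=
  (bform Jmat (v i0) (v i1), bform Jmat (v i0) (v i2), bform Jmat (v i0) (v i3),
   bform Jmat (v i1) (v i2), bform Jmat (v i1) (v i3), bform Jmat (v i2) (v i3)).

From mathcomp Require Import all_boot all_order all_algebra.
From mathcomp Require Import Rstruct.
Set Implicit Arguments. Unset Strict Implicit. Unset Printing Implicit Defensive.
Import GRing.Theory Num.Theory.
Local Open Scope ring_scope.

(* Writing V, W for the matrices with columns v_i, w_i, the Gram matrices
   V^T A V and W^T B W are skew-symmetric with the same entries above the
   diagonal (those of a symplectic basis), hence equal; likewise the
   basis-values say V^T J V = W^T J W.  So P = W V^-1 satisfies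
   P^T B P = A and P^T J P = J. *)

Definition gram (R : pzRingType) n (X V : 'M[R]_n) : 'M[R]_n := V^T *m X *m V.

Lemma gram_skew (R : comPzRingType) n (X V : 'M[R]_n) :
  X^T = - X -> (gram X V)^T = - gram X V.
Proof. by move=> skewX; rewrite /gram !trmx_mul trmxK skewX mulNmx mulmxN mulmxA. Qed.

Lemma skew_mx_diag (R : numDomainType) n (G : 'M[R]_n) i :
  G^T = - G -> G i i = 0.
Proof.
move=> /matrixP /(_ i i); rewrite !mxE => /eqP.
by rewrite -subr_eq0 opprK -mulr2n mulrn_eq0 => /eqP.
Qed.

Lemma skew_mx_eq (R : numDomainType) n (G H : 'M[R]_n) :
  G^T = - G -> H^T = - H ->
  (forall i j : 'I_n, (i < j)%N -> G i j = H i j) -> G = H.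
Proof.
move=> skewG skewH upper; apply/matrixP => i j.
case: (ltngtP i j) => [lt_ij | lt_ji | /val_inj <-]; first exact: upper.
- have /matrixP /(_ j i) := skewG; have /matrixP /(_ j i) := skewH.
  by rewrite !mxE => -> ->; rewrite upper.
- by rewrite !skew_mx_diag.
Qed.

Lemma gram_congr (R : comUnitRingType) n (X Y V W : 'M[R]_n) :
  V \in unitmx -> gram X V = gram Y W ->
  X = gram Y (W *m invmx V).
Proof.
move=> unitV eqXY.
have -> : gram Y (W *m invmx V) = invmx V^T *m gram Y W *m invmx V.
  by rewrite /gram trmx_mul trmx_inv !mulmxA.
rewrite -eqXY /gram !mulmxA mulVmx ?unitmx_tr // mul1mx.
by rewrite -mulmxA mulmxV // mulmx1.
Qed.

Lemma gram_colmatE X v i j : gram X (colmat v) i j = bform X (v i) (v j).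
Proof.
rewrite /gram /bform !mxE; apply: eq_bigr => k _; rewrite !mxE.
by congr (_ * _); apply: eq_bigr => l _; rewrite !mxE.
Qed.

Lemma ord4_cases (P : 'I_4 -> Prop) :
  P i0 -> P i1 -> P i2 -> P i3 -> forall i, P i.
Proof.
move=> P0 P1 P2 P3 [[|[|[|[|k]]]] lt_k4] //.
- by rewrite (_ : Ordinal _ = i0) //; apply: val_inj.
- by rewrite (_ : Ordinal _ = i1) //; apply: val_inj.
- by rewrite (_ : Ordinal _ = i2) //; apply: val_inj.
- by rewrite (_ : Ordinal _ = i3) //; apply: val_inj.
Qed.

Lemma ord4_lt_cases (P : 'I_4 -> 'I_4 -> Prop) :
  P i0 i1 -> P i0 i2 -> P i0 i3 -> P i1 i2 -> P i1 i3 -> P i2 i3 ->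
  forall i j : 'I_4, (i < j)%N -> P i j.
Proof.
move=> P01 P02 P03 P12 P13 P23.
by apply: ord4_cases; apply: ord4_cases => // _.
Qed.

Lemma gram_colmat_eq X Y v w : X^T = - X -> Y^T = - Y ->
  bform X (v i0) (v i1) = bform Y (w i0) (w i1) ->
  bform X (v i0) (v i2) = bform Y (w i0) (w i2) ->
  bform X (v i0) (v i3) = bform Y (w i0) (w i3) ->
  bform X (v i1) (v i2) = bform Y (w i1) (w i2) ->
  bform X (v i1) (v i3) = bform Y (w i1) (w i3) ->
  bform X (v i2) (v i3) = bform Y (w i2) (w i3) ->
  gram X (colmat v) = gram Y (colmat w).
Proof.
move=> skewX skewY e01 e02 e03 e12 e13 e23.
apply: skew_mx_eq; rewrite ?gram_skew // => i j; rewrite !gram_colmatE.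
by move: i j; exact: ord4_lt_cases.
Qed.

Lemma J0_skew : J0^T = - J0.
Proof.
apply/matrixP => i j; rewrite !mxE.
by case: i => [[|[|i]] lt_i2]; case: j => [[|[|j]] lt_j2]; rewrite //= ?oppr0 ?opprK.
Qed.

Lemma Jmat_skew : Jmat^T = - Jmat.
Proof.
suff Jblock : (block_mx J0 0 0 J0 : 'M[Rdefinitions.R]_(2 + 2))^T
             = - block_mx J0 0 0 J0 by exact: Jblock.
by rewrite tr_block_mx !trmx0 J0_skew opp_block_mx oppr0.
Qed.

Theorem mainTheorem10 (A B : mat4) (v w : 'I_4 -> vec4) :
  is_S4 A -> is_S4 B ->
  symplectic_basis A v -> symplectic_basis B w ->
  basis_values v = basis_values w ->
  exists P : mat4, is_Sp4 P /\ A = P^T *m B *m P.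
Proof.
move=> [skewA _] [skewB _] [unitV [a01 [a02 [a03 [a12 [a13 a23]]]]]]
  [_ [b01 [b02 [b03 [b12 [b13 b23]]]]]] [c01 c02 c03 c12 c13 c23].
have gramAB : gram A (colmat v) = gram B (colmat w).
  by apply: gram_colmat_eq; rewrite // ?a01 ?a02 ?a03 ?a12 ?a13 ?a23
    ?b01 ?b02 ?b03 ?b12 ?b13 ?b23.
have gramJ : gram Jmat (colmat v) = gram Jmat (colmat w).
  exact: gram_colmat_eq Jmat_skew Jmat_skew c01 c02 c03 c12 c13 c23.
exists (colmat w *m invmx (colmat v)); split.
- exact: esym (gram_congr unitV gramJ).
- exact: gram_congr unitV gramAB.
Qed.
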